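(* For each $m\geq1$, $\mathrm{Aut}_m(H)$ is a normal subgroup of $\mathrm{Aut}_c(H)$. Moreover, $\mathrm{Aut}_0(H)\supseteq\mathrm{Aut}_1(H)\supseteq\mathrm{Aut}_2(H)\supseteq\cdots$.
   Context: Let $k$ be a field and $0\neq q\in k$ not a root of unity. $H=k_q[x,x^{-1},y]$ is the $k$-algebra generated by $x,x^{-1},y$ with $xx^{-1}=x^{-1}x=1$, $yx=qxy$, a Hopf algebra with $\Delta(x)=x\otimes x$, $\Delta(x^{-1})=x^{-1}\otimes x^{-1}$, $\Delta(y)=y\otimes x+1\otimes y$, $\varepsilon(x)=1$, $\varepsilon(y)=0$; $\{x^ny^m:n\in\mathbb{Z},m\in\mathbb{N}\}$ is a $k$-basis. $H_0=\mathrm{span}\{x^n\}$, $H(m)=H_0y^m$. $\mathrm{Aut}_c(H)$ is the group under composition of coalgebra automorphisms of $H$; $\mathrm{Aut}_0(H)=\{\phi\in\mathrm{Aut}_c(H):\phi(1)=1\}$; for $m\geq1$, $\mathrm{Aut}_m(H)=\{\phi\in\mathrm{Aut}_c(H):\phi(h)=h\text{ for all }h\in\sum_{i=0}^mH(i)\}$. *)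

(* using multinomials' monalg ({malg k[K]}: finitely
   supported functions K -> k, i.e. the free k-vector space on K). *)
From HB Require Import structures.
From mathcomp Require Import all_boot all_order all_algebra.
From mathcomp Require Import finmap.
From mathcomp Require monalg.
Import monalg.
Set Implicit Arguments. Unset Strict Implicit. Unset Printing Implicit Defensive.
Import Order.TTheory GRing.Theory Num.Theory.
Local Open Scope ring_scope.

Section QuantumPlane.
Variables (k : fieldType) (q : k).

(* index (n, m) stands for the basis monomial x^n y^m, n : int, m : nat *)
Definition Idx := (int * nat)%type.
(* H = k_q[x, x^-1, y] as a k-vector space with basis {x^n y^m} *)
Definition HH := @malg Idx k.
(* H (x) H, with basis {x^n y^m (x) x^n' y^m'} *)
Definition TT := @malg (Idx * Idx)%type k.

Definition mon (a : Idx) : HH := mkmalgU a 1.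

Definition tens (u v : HH) : TT :=
  \sum_(a <- msupp u) \sum_(b <- msupp v) mkmalgU (a, b) (u@_a * v@_b).

(* product of H:  (x^a y^b)(x^c y^d) = q^(b c) x^(a+c) y^(b+d),
   which is the multiplication determined by y x = q x y, x x^-1 = 1 *)
Definition mulH (u v : HH) : HH :=
  \sum_(a <- msupp u) \sum_(b <- msupp v)
     mkmalgU (a.1 + b.1, (a.2 + b.2)%N) (u@_a * v@_b * q ^ (a.2%:Z * b.1)).

Definition mulT (s t : TT) : TT :=
  \sum_(a <- msupp s) \sum_(b <- msupp t)
     (s@_a * t@_b) *: tens (mulH (mon a.1) (mon b.1)) (mulH (mon a.2) (mon b.2)).

Definition oneT : TT := mkmalgU ((0, 0%N), (0, 0%N)) (1 : k).
(* Delta(y) = y (x) x + 1 (x) y *)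
Definition DeltaY : TT := mkmalgU ((0, 1%N), (1, 0%N)) (1 : k) + mkmalgU ((0, 0%N), (0, 1%N)) (1 : k).
Definition DeltaXn (n : int) : TT := mkmalgU ((n, 0%N), (n, 0%N)) (1 : k).
(* Delta is an algebra map: Delta(x^n y^m) = Delta(x)^n Delta(y)^m *)
Definition DeltaMon (a : Idx) : TT :=
  mulT (DeltaXn a.1) (iter a.2 (fun t => mulT t DeltaY) oneT).
Definition Delta (u : HH) : TT := \sum_(a <- msupp u) u@_a *: DeltaMon a.
(* counit: eps(x) = 1, eps(y) = 0, i.e. eps(x^n y^m) = [m == 0] *)
Definition eps (u : HH) : k := \sum_(a <- msupp u | a.2 == 0%N) u@_a.

Definition tensmap (f g : HH -> HH) (t : TT) : TT :=
  \sum_(a <- msupp t) t@_a *: tens (f (mon a.1)) (g (mon a.2)).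

Definition is_klinear (f : HH -> HH) : Prop :=
  forall (c : k) (u v : HH), f (c *: u + v) = c *: f u + f v.

Definition Aut_c (f : HH -> HH) : Prop :=
  [/\ is_klinear f, bijective f,
      (forall u, Delta (f u) = tensmap f f (Delta u))
    & (forall u, eps (f u) = eps u)].

Definition Aut_0 (f : HH -> HH) : Prop := Aut_c f /\ f (mon (0, 0%N)) = mon (0, 0%N).

(* membership in H(0) + H(1) + ... + H(m), where H(i) = H_0 y^i *)
Definition in_Hsum (m : nat) (h : HH) : Prop :=
  forall a, a \in msupp h -> (a.2 <= m)%N.

Definition Aut_m (m : nat) (f : HH -> HH) : Prop :=
  Aut_c f /\ forall h, in_Hsum m h -> f h = h.

End QuantumPlane.

From HB Require Import structures.
From mathcomp Require Import all_boot all_order all_algebra.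
From mathcomp Require Import finmap zify.
From mathcomp Require monalg.
Import monalg.
Import Order.TTheory GRing.Theory Num.Theory.
Local Open Scope ring_scope.
Set Implicit Arguments. Unset Strict Implicit. Unset Printing Implicit Defensive.

(* Everything rests on one fact: a coalgebra automorphism f of H preserves
   each H(0) + ... + H(m).  The images f(x^n) of the grouplikes are grouplike,
   hence lie in H_0.  Next, v lies in H(0) + ... + H(m+1) exactly when
   Delta(v) lies in H_0 (x) H + H (x) (H(0) + ... + H(m)): the coefficient of
   x^n y (x) x^(n+1) y^M in Delta(x^n y^(M+1)) is the q-integer
   1 + q + ... + q^M, which is nonzero because q is not a root of unity.
   Since f (x) f preserves that subspace of H (x) H whenever f preserves H_0
   and H(0) + ... + H(m), induction on m concludes.  So f^-1 maps
   H(0) + ... + H(m) into itself and conjugation by f stabilises Aut_m(H);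
   the remaining group and inclusion properties are formal. *)

Section LinearExtension.
Variables (R : nzRingType) (K : choiceType) (V : lmodType R).

Definition linext (G : K -> V) (g : {malg R[K]}) : V :=
  \sum_(a <- msupp g) g@_a *: G a.

Lemma linextEw G g (d : {fset K}) : (msupp g `<=` d)%fset ->
  linext G g = \sum_(a <- d) g@_a *: G a.
Proof.
move=> sd; apply: big_fset_incl => // a _ /mcoeff_outdom ->; exact: scale0r.
Qed.

Lemma linext_is_linear G : linear (linext G).
Proof.
move=> c g1 g2 /=.
pose d := (msupp (c *: g1 + g2) `|` msupp g1 `|` msupp g2)%fset.
rewrite !(@linextEw _ _ d) ?scaler_sumr -?big_split /=; last first.
- by apply/fsubsetP => x xa; rewrite !inE xa ?orbT.
- by apply/fsubsetP => x xa; rewrite !inE xa ?orbT.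
- by apply/fsubsetP => x xa; rewrite !inE xa ?orbT.
by apply: eq_bigr => a _; rewrite mcoeffD mcoeffZ scalerDl scalerA.
Qed.

HB.instance Definition _ G :=
  GRing.isLinear.Build R {malg R[K]} V *:%R (linext G) (linext_is_linear G).

Lemma linextD G : {morph linext G : g1 g2 / g1 + g2}.
Proof. exact: raddfD. Qed.

Lemma linextU G a c : linext G (mkmalgU a c) = c *: G a.
Proof.
rewrite /linext msuppU; case: eqP => [->|_]; first by rewrite big_seq_fset0 scale0r.
by rewrite big_seq_fset1 mcoeffUU.
Qed.

Lemma linextU1 G a : linext G (mkmalgU a 1) = G a.
Proof. by rewrite linextU scale1r. Qed.

Lemma linextU2 G a b : linext G (mkmalgU a 1 + mkmalgU b 1) = G a + G b.
Proof. by rewrite linextD !linextU1. Qed.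

Lemma eq_linext G1 G2 : G1 =1 G2 -> linext G1 =1 linext G2.
Proof. by move=> eG g; apply: eq_bigr => a _; rewrite eG. Qed.

End LinearExtension.

Lemma linext_basis (R : nzRingType) (K : choiceType) (g : {malg R[K]}) :
  linext (fun a => mkmalgU a (1 : R)) g = g.
Proof.
rewrite [RHS]monalgE; apply: eq_bigr => a _.
by apply/malgP => b; rewrite mcoeffZ !mcoeffU mulr_natr.
Qed.

Lemma linear_linext (R : nzRingType) (K : choiceType) (V W : lmodType R)
  (F : V -> W) (G : K -> V) : linear F -> forall g, F (linext G g) = linext (F \o G) g.
Proof.
move=> lF g; pose LF : {linear V -> W} := HB.pack F (GRing.isLinear.Build _ _ _ _ F lF).
rewrite -[F _]/(LF _) linear_sum; apply: eq_bigr => a _; exact: linearZ.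
Qed.

Section Coefficients.
Variables (R : nzRingType) (K : choiceType).

Lemma mcoeff_linext (K' : choiceType) (G : K -> {malg R[K']}) g z :
  (linext G g)@_z = \sum_(a <- msupp g) g@_a * (G a)@_z.
Proof. by rewrite raddf_sum; apply: eq_bigr => a _; exact: mcoeffZ. Qed.

Lemma mcoeff_linextU (K' : choiceType) (G : K -> K') (c : K -> R) g z :
  (linext (fun a => mkmalgU (G a) (c a)) g)@_z =
  \sum_(a <- msupp g) g@_a * (c a *+ (G a == z)).
Proof. by rewrite mcoeff_linext; apply: eq_bigr => a _; rewrite mcoeffU. Qed.

Lemma scale_malgU1 (c : R) (a : K) : c *: mkmalgU a 1 = mkmalgU a c.
Proof. by apply/malgP => b; rewrite mcoeffZ !mcoeffU mulr_natr. Qed.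

Lemma mcoeffU2 (a b z : K) (c d : R) :
  (mkmalgU a c + mkmalgU b d)@_z = c *+ (a == z) + d *+ (b == z).
Proof. by rewrite mcoeffD !mcoeffU. Qed.

Lemma sum_msupp_delta (g : {malg R[K]}) (F : K -> R) a0 :
  (forall a, a != a0 -> F a = 0) -> \sum_(a <- msupp g) g@_a * F a = g@_a0 * F a0.
Proof.
move=> F0; have [a0g|a0g] := boolP (a0 \in msupp g).
  by rewrite (bigD1_seq a0) //= big1 ?addr0 // => a /F0 ->; rewrite mulr0.
rewrite mcoeff_outdom // mul0r big1_seq // => a /andP[_ ag].
by rewrite F0 ?mulr0 //; apply: contraNneq a0g => <-.
Qed.

Lemma sum_msupp_neq0 (g : {malg R[K]}) (F : K -> R) :
  \sum_(a <- msupp g) g@_a * F a != 0 -> exists2 a, a \in msupp g & F a != 0.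
Proof.
move=> nz; have /hasP [a ag Fa] : has (fun a => F a != 0) (msupp g); last by exists a.
apply: contraNT nz => /hasPn F0; rewrite big1_seq // => a /andP[_ /F0].
by rewrite negbK => /eqP ->; rewrite mulr0.
Qed.

Lemma sum_msupp_preim (g : {malg R[K]}) (F : K -> R) (h : K -> K) a0 z :
  injective h -> h a0 = z ->
  \sum_(a <- msupp g) g@_a * (F a *+ (h a == z)) = g@_a0 * F a0.
Proof.
move=> h_inj <-; rewrite (sum_msupp_delta _ (a0 := a0)) => [|a]; first by rewrite eqxx.
by rewrite (inj_eq h_inj) => /negbTE ->.
Qed.

Lemma sum_msupp_nopreim (g : {malg R[K]}) (F : K -> R) (h : K -> K) z :
  (forall a, h a != z) -> \sum_(a <- msupp g) g@_a * (F a *+ (h a == z)) = 0.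
Proof. by move=> hz; rewrite big1 // => a _; rewrite (negbTE (hz a)) mulr0. Qed.

End Coefficients.

Lemma sum_expr_neq0 (R : comNzRingType) (x : R) n :
  x ^+ n.+1 != 1 -> \sum_(j < n.+1) x ^+ j != 0.
Proof. by apply: contra => /eqP S0; rewrite -subr_eq0 subrX1 S0 mulr0. Qed.

Section Tensors.
Variable k : fieldType.
Local Notation HH := (HH k).
Local Notation TT := (TT k).
Local Notation mon := (mon k).

Definition mon2 (x : Idx * Idx) : TT := mkmalgU x 1.

Lemma mcoeff_mon2 x z : (mon2 x)@_z = (x == z)%:R.
Proof. exact: mcoeffU. Qed.

Lemma msupp_mon a : msupp (mon a) = [fset a]%fset.
Proof. by rewrite msuppU oner_eq0. Qed.

Lemma tensE (u v : HH) : tens u v = linext (fun a => linext (fun b => mon2 (a, b)) v) u.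
Proof.
apply: eq_bigr => a _; rewrite scaler_sumr; apply: eq_bigr => b _.
by rewrite scalerA scale_malgU1.
Qed.

Lemma mcoeff_tens (u v : HH) x y : (tens u v)@_(x, y) = u@_x * v@_y.
Proof.
rewrite tensE mcoeff_linext (sum_msupp_delta _ (a0 := x)) => [|a xa]; last first.
  by rewrite mcoeff_linext big1 // => b _; rewrite mcoeff_mon2 xpair_eqE (negbTE xa) mulr0.
rewrite mcoeff_linext (sum_msupp_delta _ (a0 := y)) => [|b yb]; last first.
  by rewrite mcoeff_mon2 xpair_eqE (negbTE yb) andbF.
by rewrite mcoeff_mon2 eqxx mulr1.
Qed.

Lemma tens_linear_l (w : HH) c (u1 u2 : HH) :
  tens (c *: u1 + u2) w = c *: tens u1 w + tens u2 w.
Proof.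
apply/malgP => -[x y].
rewrite (mcoeff_tens (c *: u1 + u2) w x y) [RHS]mcoeffD [in RHS]mcoeffZ.
rewrite [in LHS]mcoeffD [in LHS]mcoeffZ mulrDl -mulrA.
by rewrite -(mcoeff_tens u1 w x y) -(mcoeff_tens u2 w x y).
Qed.

Lemma tens_linear_r (w : HH) c (u1 u2 : HH) :
  tens w (c *: u1 + u2) = c *: tens w u1 + tens w u2.
Proof.
apply/malgP => -[x y].
rewrite (mcoeff_tens w (c *: u1 + u2) x y) [RHS]mcoeffD [in RHS]mcoeffZ.
rewrite [in LHS]mcoeffD [in LHS]mcoeffZ mulrDr mulrCA.
by rewrite -(mcoeff_tens w u1 x y) -(mcoeff_tens w u2 x y).
Qed.

Lemma tensU (x y : Idx) (c1 c2 : k) :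
  tens (mkmalgU x c1) (mkmalgU y c2) = mkmalgU (x, y) (c1 * c2).
Proof.
apply/malgP => -[z1 z2]; rewrite (mcoeff_tens (mkmalgU x c1) _ z1 z2) !mcoeffU xpair_eqE.
by case: (x == z1); case: (y == z2); rewrite ?mulr0n ?mulr1n ?mulr0 ?mul0r.
Qed.

Lemma tensmapE (f g : HH -> HH) (t : TT) :
  tensmap f g t = linext (fun a => tens (f (mon a.1)) (g (mon a.2))) t.
Proof. by []. Qed.

Lemma mcoeff_tensmap (f g : HH -> HH) t x y : (tensmap f g t)@_(x, y) =
  \sum_(a <- msupp t) t@_a * ((f (mon a.1))@_x * (g (mon a.2))@_y).
Proof.
rewrite (mcoeff_linext (fun a => tens (f (mon a.1)) (g (mon a.2)))).
by apply: eq_bigr => a _; rewrite (mcoeff_tens (f (mon a.1))).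
Qed.

Lemma tensmap_mon2 (f g : HH -> HH) x :
  tensmap f g (mon2 x) = tens (f (mon x.1)) (g (mon x.2)).
Proof. exact: (linextU1 (fun a => tens (f (mon a.1)) (g (mon a.2)))). Qed.

Lemma eq_tensmap (f1 f2 g1 g2 : HH -> HH) :
  f1 =1 f2 -> g1 =1 g2 -> tensmap f1 g1 =1 tensmap f2 g2.
Proof. by move=> ef eg t; rewrite !tensmapE; apply: eq_linext => a; rewrite ef eg. Qed.

Lemma tensmap_id (t : TT) : tensmap id id t = t.
Proof.
rewrite tensmapE -[RHS]linext_basis; apply: eq_linext => -[x y].
by rewrite /= tensU mulr1.
Qed.

Lemma tensmap_tens (f g : HH -> HH) : is_klinear f -> is_klinear g ->
  forall u v, tensmap f g (tens u v) = tens (f u) (g v).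
Proof.
move=> lf lg u v; rewrite tensE -[u in RHS]linext_basis -[v in RHS]linext_basis.
rewrite (linear_linext _ lf) (linear_linext _ lg).
rewrite (@linear_linext _ _ _ _ (fun w => tens w _) _ (tens_linear_l _)).
rewrite (@linear_linext _ _ _ _ (tensmap f g) _ (linext_is_linear _)).
apply: eq_linext => a /=.
rewrite (@linear_linext _ _ _ _ (tens _) _ (tens_linear_r _)).
rewrite (@linear_linext _ _ _ _ (tensmap f g) _ (linext_is_linear _)).
by apply: eq_linext => b /=; rewrite tensmap_mon2.
Qed.

Lemma tensmap_comp (f1 f2 g1 g2 : HH -> HH) : is_klinear f1 -> is_klinear f2 ->
  forall t, tensmap f1 f2 (tensmap g1 g2 t) = tensmap (f1 \o g1) (f2 \o g2) t.
Proof.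
move=> lf1 lf2 t; rewrite [tensmap g1 g2 t]tensmapE.
rewrite (@linear_linext _ _ _ _ (tensmap f1 f2) _ (linext_is_linear _)).
by apply: eq_linext => a; exact: tensmap_tens.
Qed.

End Tensors.

Section Comultiplication.
Variables (k : fieldType) (q : k).
Local Notation HH := (HH k).
Local Notation TT := (TT k).
Local Notation mon := (mon k).
Local Notation mon2 := (mon2 k).

Definition addI (a b : Idx) : Idx := (a.1 + b.1, (a.2 + b.2)%N).
Definition addI2 (a b : Idx * Idx) := (addI a.1 b.1, addI a.2 b.2).

Lemma addI2l_inj b : injective (addI2 ^~ b).
Proof.
move=> [[? ?] [? ?]] [[? ?] [? ?]]; rewrite /addI2 /addI /= => -[] *.
by congr ((_, _), (_, _)); lia.
Qed.

Lemma addI2r_inj a : injective (addI2 a).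
Proof.
move=> [[? ?] [? ?]] [[? ?] [? ?]]; rewrite /addI2 /addI /= => -[] *.
by congr ((_, _), (_, _)); lia.
Qed.

(* x^a y^b x^c y^d = q^(b c) x^(a+c) y^(b+d), in each tensor factor *)
Definition qweight (a b : Idx * Idx) : k :=
  q ^ (a.1.2%:Z * b.1.1) * q ^ (a.2.2%:Z * b.2.1).

Lemma mulH_mon a b : mulH q (mon a) (mon b) = mkmalgU (addI a b) (q ^ (a.2%:Z * b.1)).
Proof. by rewrite /mulH !msupp_mon !big_seq_fset1 !mcoeffUU !mul1r. Qed.

Lemma mulTE s t : mulT q s t =
  linext (fun a => linext (fun b => mkmalgU (addI2 a b) (qweight a b)) t) s.
Proof.
apply: eq_bigr => a _; rewrite scaler_sumr; apply: eq_bigr => b _.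
by rewrite scalerA !mulH_mon tensU.
Qed.

Definition DeltaYpow (M : nat) : TT := iter M (fun t => mulT q t (DeltaY k)) (oneT k).

Definition idx_yx : Idx * Idx := ((0, 1%N), (1, 0%N)).
Definition idx_1y : Idx * Idx := ((0, 0%N), (0, 1%N)).

Lemma DeltaYpow0 : DeltaYpow 0 = mon2 ((0, 0%N), (0, 0%N)).
Proof. by []. Qed.

Lemma DeltaYpowS M : DeltaYpow M.+1 =
  linext (fun a => mkmalgU (addI2 a idx_yx) (qweight a idx_yx) +
                   mkmalgU (addI2 a idx_1y) (qweight a idx_1y)) (DeltaYpow M).
Proof. by rewrite /= mulTE; apply: eq_linext => a; exact: linextU2. Qed.

Lemma mcoeff_DeltaYpowS M z : (DeltaYpow M.+1)@_z =
  \sum_(a <- msupp (DeltaYpow M))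
     (DeltaYpow M)@_a * (qweight a idx_yx *+ (addI2 a idx_yx == z)) +
  \sum_(a <- msupp (DeltaYpow M))
     (DeltaYpow M)@_a * (qweight a idx_1y *+ (addI2 a idx_1y == z)).
Proof.
rewrite DeltaYpowS mcoeff_linext -big_split; apply: eq_bigr => a _.
by rewrite mcoeffU2 mulrDr.
Qed.

Lemma DeltaYpow_supp M z : (DeltaYpow M)@_z != 0 ->
  z.1.1 = 0 /\ (z.1.2 + z.2.2)%N = M.
Proof.
elim: M z => [|M IH] z.
  by rewrite DeltaYpow0 mcoeff_mon2; case: (@eqP _ _ z) => [<-|]; rewrite ?eqxx.
have step (b : Idx * Idx) : b.1.1 = 0 -> (b.1.2 + b.2.2 = 1)%N ->
    \sum_(a <- msupp (DeltaYpow M))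
       (DeltaYpow M)@_a * (qweight a b *+ (addI2 a b == z)) != 0 ->
    z.1.1 = 0 /\ (z.1.2 + z.2.2)%N = M.+1.
  move=> b11 b2 /sum_msupp_neq0 [a]; rewrite -mcoeff_neq0 => /IH [a11 a2].
  case: (@eqP _ _ z) => [<- _|]; last by rewrite mulr0n eqxx.
  move: a11 a2 b11 b2; case: a => [[? ?] [? ?]]; case: b => [[? ?] [? ?]] /= -> ? -> ?.
  by rewrite /addI2 /addI /= addr0; split; lia.
rewrite mcoeff_DeltaYpowS.
set S1 := \sum_(_ <- _) _ * (_ *+ (addI2 _ idx_yx == z)).
have [->|/(step idx_yx erefl erefl) //] := eqVneq S1 0.
by rewrite add0r => /(step idx_1y erefl erefl).
Qed.

Lemma mcoeff_DeltaYpow_top M : (DeltaYpow M)@_((0, 0%N), (0, M)) = 1.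
Proof.
elim: M => [|M IH]; first exact: mcoeffUU.
rewrite mcoeff_DeltaYpowS sum_msupp_nopreim ?add0r => [|a]; last first.
  by rewrite /addI2 /addI /= !xpair_eqE; lia.
rewrite (sum_msupp_preim _ _ (@addI2l_inj idx_1y) (a0 := ((0, 0%N), (0, M)))).
  by rewrite IH /qweight /= !mulr0 expr0z !mulr1.
by rewrite /addI2 /addI /= addn1.
Qed.

Lemma mcoeff_DeltaYpow_qint M :
  (DeltaYpow M.+1)@_((0, 1%N), (1, M)) = \sum_(j < M.+1) q ^+ j.
Proof.
elim: M => [|M IH].
  rewrite mcoeff_DeltaYpowS (sum_msupp_nopreim _ _ (h := addI2 ^~ idx_1y)) ?addr0 => [|a].
    rewrite (sum_msupp_preim _ _ (@addI2l_inj idx_yx) (a0 := ((0, 0%N), (0, 0%N)))) //.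
    by rewrite mcoeff_DeltaYpow_top big_ord1 /qweight /= !mulr0 expr0z !mulr1.
  by rewrite /addI2 /addI /= !xpair_eqE; lia.
rewrite mcoeff_DeltaYpowS.
rewrite (sum_msupp_preim _ _ (@addI2l_inj idx_yx) (a0 := ((0, 0%N), (0, M.+1)))); last first.
  by rewrite /addI2 /addI /= addn0.
rewrite (sum_msupp_preim _ _ (@addI2l_inj idx_1y) (a0 := ((0, 1%N), (1, M)))); last first.
  by rewrite /addI2 /addI /= addn1.
rewrite mcoeff_DeltaYpow_top IH [RHS]big_ord_recr /qweight /=.
by rewrite !mulr0 expr0z !mulr1 !mul1r addrC.
Qed.

Lemma mcoeff_DeltaMon a z :
  (DeltaMon q a)@_z = (DeltaYpow a.2)@_((z.1.1 - a.1, z.1.2), (z.2.1 - a.1, z.2.2)).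
Proof.
rewrite /DeltaMon mulTE /DeltaXn linextU1 mcoeff_linextU.
rewrite (sum_msupp_preim _ _ (@addI2r_inj ((a.1, 0%N), (a.1, 0%N)))
  (a0 := ((z.1.1 - a.1, z.1.2), (z.2.1 - a.1, z.2.2)))).
  by rewrite /qweight /= -[Posz 0]/(0 : int) !mul0r expr0z !mulr1.
by case: z => [[? ?] [? ?]]; rewrite /addI2 /addI /=; congr ((_, _), (_, _)); lia.
Qed.

Lemma DeltaMon_supp a z : (DeltaMon q a)@_z != 0 ->
  z.1.1 = a.1 /\ (z.1.2 + z.2.2)%N = a.2.
Proof.
by rewrite mcoeff_DeltaMon => /DeltaYpow_supp [/= /eqP]; rewrite subr_eq0 => /eqP.
Qed.

Lemma DeltaMon_xpow n : DeltaMon q (n, 0%N) = mon2 ((n, 0%N), (n, 0%N)).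
Proof.
apply/malgP => z; rewrite mcoeff_DeltaMon DeltaYpow0 !mcoeff_mon2.
have E x : (0 == x - n) = (n == x) by rewrite eq_sym subr_eq0 eq_sym.
by case: z => [[? ?] [? ?]]; rewrite /= !xpair_eqE !E.
Qed.

Lemma mcoeff_DeltaMon_qint n M :
  (DeltaMon q (n, M.+1))@_((n, 1%N), (n + 1, M)) = \sum_(j < M.+1) q ^+ j.
Proof. by rewrite mcoeff_DeltaMon /= subrr addrAC subrr add0r mcoeff_DeltaYpow_qint. Qed.

Lemma mcoeff_Delta u z : (Delta q u)@_z = \sum_(a <- msupp u) u@_a * (DeltaMon q a)@_z.
Proof. exact: (mcoeff_linext (DeltaMon q)). Qed.

Lemma Delta_mon a : Delta q (mon a) = DeltaMon q a.
Proof. exact: (linextU1 (DeltaMon q)). Qed.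

End Comultiplication.

Section Filtration.
Variables (k : fieldType) (q : k).
Hypothesis q_not_root1 : forall n : nat, (0 < n)%N -> q ^+ n != 1.
Local Notation HH := (HH k).
Local Notation TT := (TT k).
Local Notation mon := (mon k).

Lemma in_HsumE m (h : HH) : in_Hsum m h <-> forall a, (m < a.2)%N -> h@_a = 0.
Proof.
split=> H a; last by rewrite -mcoeff_neq0 leqNgt; apply: contra => /H/eqP.
by move=> ma; apply/eqP; rewrite mcoeff_eq0; apply/negP => /H; rewrite leqNgt ma.
Qed.

Lemma in_Hsum_mon m a : (a.2 <= m)%N -> in_Hsum m (mon a).
Proof. by move=> am b; rewrite msupp_mon inE => /eqP ->. Qed.

Lemma in_Hsum_le m n (h : HH) : (m <= n)%N -> in_Hsum m h -> in_Hsum n h.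
Proof. by move=> mn hm a /hm am; exact: leq_trans am mn. Qed.

(* t lies in  H_0 (x) H + H (x) (H(0) + ... + H(m)) *)
Definition in_Tsum m (t : TT) :=
  forall x y : Idx, (0 < x.2)%N -> (m < y.2)%N -> t@_(x, y) = 0.

(* If b0 has maximal y-degree d in v, the coefficient of b0 (x) b0 in Delta(v)
   can only come from monomials of y-degree 2d, so d = 0. *)
Lemma grouplike_in_H0 v : Delta q v = tens v v -> in_Hsum 0 v.
Proof.
move=> Dv a av; rewrite leqn0; apply/eqP.
have [/= b0 _ maxb0] := @arg_maxnP (msupp v) [` av]%fset xpredT (fun b => (val b).2) isT.
have : (Delta q v)@_(val b0, val b0) != 0.
  by rewrite Dv (mcoeff_tens v) mulf_neq0 // mcoeff_neq0 fsvalP.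
rewrite mcoeff_Delta => /sum_msupp_neq0 [b bv /DeltaMon_supp [_ /= deg_b]].
by have := maxb0 [` bv]%fset isT; have := maxb0 [` av]%fset isT; rewrite /=; lia.
Qed.

Lemma Delta_in_Tsum m u : in_Hsum m.+1 u -> in_Tsum m (Delta q u).
Proof.
move=> um x y x0 ym; rewrite mcoeff_Delta big1_seq // => a /andP[_ au].
have [->|/DeltaMon_supp [_ /= deg_a]] := eqVneq ((DeltaMon q a)@_(x, y)) 0.
  exact: mulr0.
have := um a au; move: x0 ym deg_a; case: a x y {au} => [? ?] [? ?] [? ?] /=; lia.
Qed.

Lemma in_Tsum_Delta m v : in_Tsum m (Delta q v) -> in_Hsum m.+1 v.
Proof.
move=> vT; apply/in_HsumE => -[n [|M]] //= mM.
have := vT (n, 1%N) (n + 1, M) isT mM.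
rewrite mcoeff_Delta (sum_msupp_delta _ (a0 := (n, M.+1))) => [|a].
  rewrite mcoeff_DeltaMon_qint => /eqP; rewrite mulf_eq0 => /orP[/eqP //|].
  by rewrite (negbTE (sum_expr_neq0 (q_not_root1 _))).
apply: contraNeq => /DeltaMon_supp [/= e1 e2]; apply/eqP.
by case: a e1 e2 => /= ? ? <- <-; rewrite add1n.
Qed.

Lemma tensmap_in_Tsum m f g t :
  (forall n, in_Hsum 0 (f (mon (n, 0%N)))) ->
  (forall a : Idx, (a.2 <= m)%N -> in_Hsum m (g (mon a))) ->
  in_Tsum m t -> in_Tsum m (tensmap f g t).
Proof.
move=> f_x g_m tm x y x0 ym; rewrite mcoeff_tensmap big1_seq // => -[a1 a2] /andP[_ _].
have [->|ta] := eqVneq (t@_(a1, a2)) 0; first exact: mul0r.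
case: a1 ta => n [|s] ta.
  by rewrite ((in_HsumE _ _).1 (f_x n) x x0) mul0r mulr0.
have a2m : (a2.2 <= m)%N by rewrite leqNgt; apply: contra ta => ?; apply/eqP/tm.
by rewrite ((in_HsumE _ _).1 (g_m a2 a2m) y ym) !mulr0.
Qed.

Section CoalgebraMaps.
Variable f : HH -> HH.
Hypothesis Delta_f : forall u, Delta q (f u) = tensmap f f (Delta q u).

Lemma coalg_map_xpow n : in_Hsum 0 (f (mon (n, 0%N))).
Proof.
by apply: grouplike_in_H0; rewrite Delta_f Delta_mon DeltaMon_xpow tensmap_mon2.
Qed.

Lemma coalg_map_in_Hsum_succ m :
  (forall a : Idx, (a.2 <= m)%N -> in_Hsum m (f (mon a))) ->
  forall u, in_Hsum m.+1 u -> in_Hsum m.+1 (f u).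
Proof.
move=> f_m u um; apply: in_Tsum_Delta; rewrite Delta_f.
by apply: tensmap_in_Tsum => //; [exact: coalg_map_xpow | exact: Delta_in_Tsum].
Qed.

Lemma coalg_map_mon m a : (a.2 <= m)%N -> in_Hsum m (f (mon a)).
Proof.
elim: m a => [|m IH] [n s] /=; first by rewrite leqn0 => /eqP ->; exact: coalg_map_xpow.
by move=> sm; apply: (coalg_map_in_Hsum_succ IH); exact: in_Hsum_mon.
Qed.

Lemma coalg_map_in_Hsum m u : in_Hsum m.+1 u -> in_Hsum m.+1 (f u).
Proof. exact/coalg_map_in_Hsum_succ/coalg_map_mon. Qed.

End CoalgebraMaps.
End Filtration.

Section Automorphisms.
Variables (k : fieldType) (q : k).
Local Notation HH := (HH k).

Lemma Aut_c_id : Aut_c q id.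
Proof. by split=> // [|u]; [exists id | rewrite tensmap_id]. Qed.

Lemma Aut_c_comp f g : Aut_c q f -> Aut_c q g -> Aut_c q (f \o g).
Proof.
case=> lf bf Df ef [lg bg Dg eg]; split.
- by move=> c u v /=; rewrite lg lf.
- exact: bij_comp.
- by move=> u /=; rewrite Df Dg tensmap_comp.
- by move=> u /=; rewrite ef eg.
Qed.

Lemma Aut_c_inv f g : Aut_c q f -> cancel f g -> cancel g f -> Aut_c q g.
Proof.
case=> lf _ Df ef fK gK.
have lg : is_klinear g by move=> c u v; apply: (can_inj fK); rewrite lf !gK.
split=> [//||u|u]; first exact: Bijective gK fK.
  have := Df (g u); rewrite gK => ->.
  by rewrite tensmap_comp // (eq_tensmap fK fK) tensmap_id.
by rewrite -{2}(gK u) ef.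
Qed.

Lemma Aut_m_id m : Aut_m q m id.
Proof. by split=> //; exact: Aut_c_id. Qed.

Lemma Aut_m_comp m f g : Aut_m q m f -> Aut_m q m g -> Aut_m q m (f \o g).
Proof.
move=> [cf hf] [cg hg]; split; first exact: Aut_c_comp.
by move=> h Hh /=; rewrite hg // hf.
Qed.

Lemma Aut_m_inv m f g : Aut_m q m f -> cancel f g -> cancel g f -> Aut_m q m g.
Proof.
move=> [cf hf] fK gK; split; first exact: Aut_c_inv cf fK gK.
by move=> h Hh; rewrite -{1}(hf h Hh) fK.
Qed.

Lemma Aut_m_conj m f g h :
  (forall n : nat, (0 < n)%N -> q ^+ n != 1) -> (1 <= m)%N ->
  Aut_c q f -> cancel f g -> cancel g f -> Aut_m q m h -> Aut_m q m (f \o h \o g).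
Proof.
move=> q_not_root1 m1 cf fK gK [ch hh]; have cg := Aut_c_inv cf fK gK.
split; first exact: Aut_c_comp (Aut_c_comp cf ch) cg.
case: m m1 hh => // m _ hh u um /=; have [_ _ Dg _] := cg.
by rewrite hh ?gK //; exact: (coalg_map_in_Hsum q_not_root1 Dg).
Qed.

Lemma Aut_m_Aut_0 m f : Aut_m q m f -> Aut_0 q f.
Proof. by case=> cf hf; split=> //; apply/hf/in_Hsum_mon. Qed.

Lemma Aut_m_le m n f : (m <= n)%N -> Aut_m q n f -> Aut_m q m f.
Proof. by move=> mn [cf hf]; split=> // h /(in_Hsum_le mn); exact: hf. Qed.

End Automorphisms.

Theorem lemma3p1 (k : fieldType) (q : k) (hq0 : q != 0)
  (hq : forall n : nat, (0 < n)%N -> q ^+ n != 1) :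
  (forall m : nat, (1 <= m)%N ->
     [/\ (forall f, Aut_m q m f -> Aut_c q f),
         Aut_m q m id,
         (forall f g, Aut_m q m f -> Aut_m q m g -> Aut_m q m (f \o g)),
         (forall f g, Aut_m q m f -> cancel f g -> cancel g f -> Aut_m q m g)
       & (forall f g h, Aut_c q f -> cancel f g -> cancel g f ->
            Aut_m q m h -> Aut_m q m (f \o h \o g))]) /\
  (forall f, Aut_m q 1 f -> Aut_0 q f) /\
  (forall m : nat, (1 <= m)%N -> forall f, Aut_m q m.+1 f -> Aut_m q m f).
Proof.
split; last split.
- move=> m m1; split.
  + by move=> f [].
  + exact: Aut_m_id.
  + exact: Aut_m_comp.
  + exact: Aut_m_inv.
  + by move=> f g h; exact: Aut_m_conj.
- exact: Aut_m_Aut_0.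
- by move=> m _ f; apply: Aut_m_le.
Qed.
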